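(* Let $\mu:I\to\mathbb{N}^*$ be a signature. The set $\mathscr{J}(\Omega_\mu)$ of ideals of $\Omega_\mu$, with the topology induced by the product topology on the power set $\mathfrak P(\Omega_\mu)\cong\{0,1\}^{\Omega_\mu}$, is compact if and only if $\mu^{-1}[\mathbb{N}^*\setminus\{1\}]=\{i\in I:\mu_i\ge 2\}$ is finite.
   Context: A relational structure of signature $\mu$ is $(A;(R_i)_{i\in I})$ with $R_i$ a $\mu_i$-ary relation on $A$; embeddings are injective maps preserving and reflecting all relations. $\Omega_\mu$ is the set of isomorphism types of finite structures of signature $\mu$, ordered by embeddability. An ideal of $\Omega_\mu$ is a non-empty, downward closed, up-directed subset. *)

From HB Require Import structures.
From mathcomp Require Import all_boot all_order.
From mathcomp Require Import all_classical.
From mathcomp Require Import topology.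

Set Implicit Arguments.
Unset Strict Implicit.
Unset Printing Implicit Defensive.

Local Open Scope classical_set_scope.

Section Structures.
Variables (I : Type) (mu : I -> nat).

(* A finite relational structure of signature mu, with domain 'I_dcard
   (every finite structure is isomorphic to one of this form):
   for each i : I, rel i is a mu_i-ary relation on 'I_dcard, i.e. a subset
   of 'I_dcard ^ mu_i. *)
Record fstruct := FStruct {
  dcard : nat;
  rel : forall i : I, {set (mu i).-tuple 'I_dcard} }.

Definition is_embedding (A B : fstruct) (f : 'I_(dcard A) -> 'I_(dcard B)) : Prop :=
  injective f /\
  forall (i : I) (x : (mu i).-tuple 'I_(dcard A)),
    (x \in rel A i) = (map_tuple f x \in rel B i).

Definition embeds (A B : fstruct) : Prop :=
  exists f, @is_embedding A B f.

Definition isomorphic (A B : fstruct) : Prop :=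
  exists f, @is_embedding A B f /\ bijective f.

Definition iso_class (A : fstruct) : set fstruct := [set B | isomorphic A B].

Definition Omega : Type := {C : set fstruct | exists A, C = iso_class A}.

Definition Omega_le (a b : Omega) : Prop :=
  exists A B, proj1_sig a A /\ proj1_sig b B /\ embeds A B.

Definition is_ideal (J : set Omega) : Prop :=
  J !=set0 /\
  (forall a b, Omega_le a b -> J b -> J a) /\
  (forall a b, J a -> J b -> exists2 c, J c & Omega_le a c /\ Omega_le b c).

End Structures.

(* The set of ideals, as a subset of the power set P(Omega_mu) = {0,1}^Omega_mu
   carrying the product (pointwise) topology. *)
Definition ideals (I : Type) (mu : I -> nat) : set {ptws Omega mu -> bool} :=
  [set f | is_ideal [set a | f a]].

From Pilot Require Import Defs.
From HB Require Import structures.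
From mathcomp Require Import all_boot all_order.
From mathcomp Require Import all_classical.
From mathcomp Require Import finmap topology.

Set Implicit Arguments.
Unset Strict Implicit.
Unset Printing Implicit Defensive.

Local Open Scope classical_set_scope.

Local Notation rel := Defs.rel.
Notation embedding A B f := (@is_embedding _ _ A B f).

(** If only finitely many symbols have arity at least 2, the ideals form a
    closed, hence compact, subset of the Cantor cube: two types a, b of an ideal
    have a common upper bound in it, and the substructure of that bound
    generated by the images of a and b has at most |a| + |b| points, unary
    relations determined by a and b, and finitely many choices for the other
    relations.  So directedness is witnessed on finitely many coordinates and
    survives pointwise limits.

    If infinitely many symbols have arity at least 2, pick two of them, i0 and
    i1, and the two-point structures carrying a single i0-edge, resp. i1-edge.
    The union of their down-sets is not directed, yet on any finite set of
    types it agrees with the down-set of a triangle with edges labelled i0, i1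
    and a fresh symbol j.  So it lies in the closure of the ideals, which are
    therefore not closed and, the cube being Hausdorff, not compact. *)

Lemma map_tuple_comp n (T1 T2 T3 : Type) (f : T1 -> T2) (g : T2 -> T3)
    (t : n.-tuple T1) :
  map_tuple g (map_tuple f t) = map_tuple (g \o f) t.
Proof. by apply: val_inj; rewrite /= map_comp. Qed.

Lemma map_tuple_id n (T : Type) (t : n.-tuple T) : map_tuple id t = t.
Proof. by apply: val_inj; apply: map_id. Qed.

Lemma eq_map_tuple n (T1 T2 : Type) (f g : T1 -> T2) (t : n.-tuple T1) :
  f =1 g -> map_tuple f t = map_tuple g t.
Proof. by move=> fg; apply: val_inj; apply: eq_map. Qed.

Lemma map_tuple_inj n (T1 T2 : eqType) (f : T1 -> T2) :
  injective f -> injective (@map_tuple n _ _ f).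
Proof. by move=> f_inj t u /(congr1 val) /(inj_map f_inj) tu; apply: val_inj. Qed.

Lemma tuple_le1_nseq m (T : Type) (t : m.-tuple T) (q : 'I_m) :
  (m <= 1)%N -> t = nseq_tuple m (tnth t q).
Proof.
move=> m_le1; have ord0 (r : 'I_m) : val r = 0%N.
  by apply/eqP; rewrite -leqn0 -ltnS (leq_trans (ltn_ord r) m_le1).
apply: eq_from_tnth => q'; rewrite tnth_nseq; congr tnth.
by apply: val_inj; rewrite /= !ord0.
Qed.

Lemma map_nseq_tuple m (T1 T2 : Type) (f : T1 -> T2) (x : T1) :
  map_tuple f (nseq_tuple m x) = nseq_tuple m (f x).
Proof. by apply: val_inj; apply: map_nseq. Qed.

Lemma map_tuple_ffun m (T1 : finType) (T2 : Type) (f : T1 -> T2) (t : m.-tuple T1) :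
  map_tuple [ffun x => f x] t = map_tuple f t.
Proof. by apply: eq_map_tuple => x; rewrite ffunE. Qed.

Definition pair_tuple m (T : Type) (x y : T) : m.-tuple T :=
  [tuple if val k == 0%N then x else y | k < m].

Lemma map_pair_tuple m (T1 T2 : Type) (g : T1 -> T2) x y :
  map_tuple g (pair_tuple m x y) = pair_tuple m (g x) (g y).
Proof. by apply: eq_from_tnth => k; rewrite tnth_map !tnth_mktuple; case: eqP. Qed.

Lemma map_tuple_neq m (T1 : Type) (T2 : eqType) (g : T1 -> T2)
    (t : m.-tuple T1) (u : m.-tuple T2) k :
  (forall z, g z != tnth u k) -> map_tuple g t != u.
Proof.
by move=> g_k; apply/eqP => gt; move: (g_k (tnth t k)); rewrite -gt tnth_map eqxx.
Qed.

Lemma map_lift_pair_tuple m n (h : 'I_n.+1) (t : m.-tuple 'I_n) x y :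
  (map_tuple (lift h) t == pair_tuple m (lift h x) (lift h y)) = (t == pair_tuple m x y).
Proof. by rewrite -map_pair_tuple (inj_eq (map_tuple_inj (@lift_inj _ h))). Qed.

Lemma map_lift_neq_pair_tuplel m n (h : 'I_n.+1) (t : m.-tuple 'I_n) y :
  (0 < m)%N -> map_tuple (lift h) t != pair_tuple m h y.
Proof.
move=> m_gt0; apply: (@map_tuple_neq _ _ _ _ _ _ (Ordinal m_gt0)) => z.
by rewrite tnth_mktuple eq_sym neq_lift.
Qed.

Lemma map_lift_neq_pair_tupler m n (h : 'I_n.+1) (t : m.-tuple 'I_n) x :
  (1 < m)%N -> map_tuple (lift h) t != pair_tuple m x h.
Proof.
move=> m_gt1; apply: (@map_tuple_neq _ _ _ _ _ _ (Ordinal m_gt1)) => z.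
by rewrite tnth_mktuple eq_sym neq_lift.
Qed.

Lemma finite_set_enum (T : Type) (S : set T) :
  finite_set S -> exists k (s : 'I_k -> T), forall x, S x -> exists j, s j = x.
Proof.
move=> /(@finite_seqP {classic T})[l ->]; exists (size l), (tnth (in_tuple l)).
move=> x xl; have x_idx : (index (x : {classic T}) l < size l)%N by rewrite index_mem.
by exists (Ordinal x_idx); rewrite (tnth_nth (x : {classic T})) /= nth_index.
Qed.

Lemma finite_singleton_witnesses (T : Type) (A : set T) :
  finite_set [set x | A = [set x]].
Proof.
have [[x ->]|noA] := pselect (exists x, A = [set x]).
  apply: sub_finite_set (finite_set1 x) => y xy.
  by have : [set x] y by rewrite xy.
by apply: sub_finite_set (finite_set0 T) => y Ay; apply: noA; exists y.
Qed.

Section PointwiseBool.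
Variable T : Type.
Implicit Types (f g : {ptws T -> bool}) (K : set T).

Definition agree_on K f : set {ptws T -> bool} :=
  [set g | forall d, K d -> g d = f d].

Lemma nbhs_agree_on K f : finite_set K -> nbhs f (agree_on K f).
Proof.
move=> /(@finite_fsetP {classic T})[X ->].
have -> : agree_on [set` X] f = \bigcap_(d in [set` X]) [set g | g d = f d] by [].
apply: (@filter_bigI _ {classic T}) => d _.
apply: (@proj_continuous {classic T} (fun _ => bool) d f [set f d]).
by rewrite nbhs_principalE; apply/principal_filterP.
Qed.

Lemma nbhs_ptwsP f (N : set {ptws T -> bool}) :
  nbhs f N -> exists2 K, finite_set K & agree_on K f `<=` N.
Proof.
pose F := filter_from [set K | finite_set K] (agree_on ^~ f).
have F_filter : Filter F.
  apply: filter_from_filter; first by exists set0; apply: finite_set0.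
  move=> K1 K2 K1_fin K2_fin; exists (K1 `|` K2); first by rewrite /= finite_setU.
  by move=> g fg; split=> d Kd; apply: fg; [left | right].
suff Ff : F --> f by move=> /Ff[K K_fin KN]; exists K.
apply/cvg_sup => d U; rewrite nbhsE => -[V [[W _ <-] Wf] VU].
exists [set d]; first exact: finite_set1.
by move=> g fg; apply: VU; rewrite /= (fg d erefl).
Qed.

Lemma closure_ptwsP (S : set {ptws T -> bool}) f :
  closure S f <-> forall K, finite_set K -> exists2 g, S g & agree_on K f g.
Proof.
split=> [Sf K K_fin|Sf N /nbhs_ptwsP[K K_fin KN]].
  by have [g []] := Sf _ (nbhs_agree_on f K_fin); exists g.
by have [g Sg fg] := Sf K K_fin; exists g; split=> //; apply: KN.
Qed.

Lemma compact_ptws_bool : compact [set: {ptws T -> bool}].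
Proof.
have := @tychonoff {classic T} (fun _ => bool) (fun _ => setT) (fun _ => bool_compact).
by congr compact; apply/seteqP.
Qed.

Lemma hausdorff_ptws_bool : hausdorff_space {ptws T -> bool}.
Proof.
exact: (@hausdorff_product {classic T} (fun _ => bool) (fun _ => discrete_hausdorff)).
Qed.

End PointwiseBool.

Section Embeddings.
Variables (I : Type) (mu : I -> nat).
Implicit Types A B C D : fstruct mu.

Lemma is_embedding_id A : embedding A A id.
Proof. by split=> // i t; rewrite map_tuple_id. Qed.

Lemma is_embedding_comp A B C f g :
  embedding A B f -> embedding B C g -> embedding A C (g \o f).
Proof.
move=> [f_inj f_rel] [g_inj g_rel]; split; first exact: inj_comp.
by move=> i t; rewrite f_rel g_rel map_tuple_comp.
Qed.

Lemma embedding_rel A B f i t :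
  embedding A B f -> t \in rel A i -> map_tuple f t \in rel B i.
Proof. by move=> [_ f_rel]; rewrite f_rel. Qed.

Lemma embedding_factor D B C h g :
  embedding D C h -> embedding B C g -> (forall x, exists y, h x = g y) ->
  exists2 p, embedding D B p & forall x, h x = g (p x).
Proof.
move=> [h_inj h_rel] [g_inj g_rel] h_sub_g.
pose p x := projT1 (cid (h_sub_g x)).
have hp x : h x = g (p x) by rewrite /p; case: cid.
exists p => //; split=> [x y pxy|i t]; first by apply: h_inj; rewrite !hp pxy.
by rewrite h_rel g_rel map_tuple_comp (eq_map_tuple _ hp).
Qed.

Lemma embeds_refl A : embeds A A.
Proof. by exists id; apply: is_embedding_id. Qed.

Lemma embeds_trans A B C : embeds A B -> embeds B C -> embeds A C.
Proof. by move=> [f fA] [g gB]; exists (g \o f); apply: is_embedding_comp fA gB. Qed.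

Lemma embeds_rel_neq0 A B i :
  embeds A B -> rel A i != finset.set0 -> rel B i != finset.set0.
Proof.
move=> [f fA] /finset.set0Pn[t tA]; apply/finset.set0Pn.
by exists (map_tuple f t); apply: embedding_rel fA tA.
Qed.

Lemma isomorphic_refl A : isomorphic A A.
Proof. by exists id; split; [apply: is_embedding_id | exists id]. Qed.

Lemma isomorphic_sym A B : isomorphic A B -> isomorphic B A.
Proof.
move=> [f [[_ f_rel] [g fK gK]]]; exists g; split; last by exists f.
split=> [|i t]; first exact: can_inj gK.
by rewrite f_rel map_tuple_comp (eq_map_tuple _ gK) map_tuple_id.
Qed.

Lemma isomorphic_trans A B C : isomorphic A B -> isomorphic B C -> isomorphic A C.
Proof.
move=> [f [fA f_bij]] [g [gB g_bij]]; exists (g \o f).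
by split; [apply: is_embedding_comp fA gB | apply: bij_comp].
Qed.

Lemma isomorphic_embeds A B : isomorphic A B -> embeds A B.
Proof. by move=> [f [fA _]]; exists f. Qed.

End Embeddings.

Section IsoTypes.
Variables (I : Type) (mu : I -> nat).
Implicit Types A B : fstruct mu.

Definition iso_type A : Omega mu := exist _ (iso_class A) (ex_intro _ A erefl).

Lemma iso_type_self A : sval (iso_type A) A.
Proof. exact: isomorphic_refl. Qed.

Definition rep (a : Omega mu) : fstruct mu := projT1 (cid (svalP a)).

Lemma rep_in (a : Omega mu) : sval a (rep a).
Proof. by rewrite /rep; case: cid => A /= ->; apply: isomorphic_refl. Qed.

Lemma Omega_in_isomorphic (a : Omega mu) A B : sval a A -> sval a B -> isomorphic A B.
Proof.
case: a => X [C eX] /=; rewrite eX => CA CB.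
exact: isomorphic_trans (isomorphic_sym CA) CB.
Qed.

Lemma Omega_leP (a b : Omega mu) A B : sval a A -> sval b B ->
  Omega_le a b <-> embeds A B.
Proof.
move=> aA bB; split=> [[A' [B' [aA' [bB' A'B']]]]|AB]; last by exists A, B.
apply: embeds_trans (isomorphic_embeds (Omega_in_isomorphic aA aA')) _.
exact: embeds_trans A'B' (isomorphic_embeds (Omega_in_isomorphic bB' bB)).
Qed.

Lemma Omega_le_refl (a : Omega mu) : Omega_le a a.
Proof. exact/(Omega_leP (rep_in a) (rep_in a))/embeds_refl. Qed.

Lemma Omega_le_trans (a b c : Omega mu) : Omega_le a b -> Omega_le b c -> Omega_le a c.
Proof. by rewrite !(Omega_leP (rep_in _) (rep_in _)); apply: embeds_trans. Qed.

End IsoTypes.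

Section InducedSubstructure.
Variables (I : Type) (mu : I -> nat) (C : fstruct mu) (P : {set 'I_(dcard C)}).

Definition induced_on : fstruct mu :=
  FStruct (fun i => [set t | map_tuple (enum_val : 'I_#|P| -> _) t \in rel C i])%SET.

Lemma induced_on_embedding : embedding induced_on C enum_val.
Proof. by split=> [|i t]; [apply: enum_val_inj | rewrite inE]. Qed.

Lemma induced_on_factor D h :
  embedding D C h -> (forall x, h x \in P) ->
  exists2 p, embedding D induced_on p & forall x, h x = enum_val (p x).
Proof.
move=> hD hP; apply: embedding_factor hD induced_on_embedding _ => x.
by exists (enum_rank_in (hP x) (h x)); rewrite enum_rankK_in.
Qed.

End InducedSubstructure.

Section Amalgam.
Variables (I : Type) (mu : I -> nat) (k : nat) (s : 'I_k -> I) (A B : fstruct mu).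

Definition amalgam_data n :=
  ({ffun 'I_(dcard A) -> 'I_n} * {ffun 'I_(dcard B) -> 'I_n}
   * {dffun forall j : 'I_k, {set (mu (s j)).-tuple 'I_n}})%type.

(* When s enumerates the symbols of arity at least 2, every structure generated
   by images of A and B is of this form (jointly_onto_amalgam): a unary
   relation holds at an image point iff it holds at its preimage. *)
Definition amalgam n (d : amalgam_data n) : fstruct mu := FStruct (fun i =>
  [set t | asbool [\/ exists2 x, x \in rel A i & t = map_tuple d.1.1 x,
                      exists2 y, y \in rel B i & t = map_tuple d.1.2 y |
                      exists2 j, s j = i & exists2 u, u \in d.2 j & val u = val t]])%SET.

Hypothesis mu_pos : forall i, (0 < mu i)%N.
Hypothesis s_onto : forall i, (2 <= mu i)%N -> exists j, s j = i.

Lemma jointly_onto_amalgam C f h :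
  embedding A C f -> embedding B C h ->
  (forall z, (exists x, f x = z) \/ (exists y, h y = z)) ->
  C = amalgam ([ffun x => f x], [ffun y => h y], [ffun j => rel C (s j)]).
Proof.
case: C f h => n r f h fA hB fh_onto /=; congr FStruct.
apply: functional_extensionality_dep => i; apply/setP => t; rewrite inE /=.
apply/idP/asboolP => [tr|[[x xA ->]|[y yB ->]|[j sj [u]]]].
- have [mu_ge2|mu_le1] := leqP 2 (mu i).
    have [j sj] := s_onto mu_ge2; subst i.
    by constructor 3; exists j => //; exists t; rewrite ?ffunE.
  have t_nseq := tuple_le1_nseq t (Ordinal (mu_pos i)) mu_le1.
  have [[x fx]|[y hy]] := fh_onto (tnth t (Ordinal (mu_pos i))).
    constructor 1; exists (nseq_tuple (mu i) x).
      by rewrite fA.2 map_nseq_tuple fx -t_nseq.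
    by rewrite map_tuple_ffun map_nseq_tuple fx.
  constructor 2; exists (nseq_tuple (mu i) y).
    by rewrite hB.2 map_nseq_tuple hy -t_nseq.
  by rewrite map_tuple_ffun map_nseq_tuple hy.
- by rewrite map_tuple_ffun; apply: embedding_rel fA xA.
- by rewrite map_tuple_ffun; apply: embedding_rel hB yB.
- by subst i; rewrite ffunE => ur /val_inj <-.
Qed.

Lemma amalgam_between C f h :
  embedding A C f -> embedding B C h ->
  exists n (d : amalgam_data n), [/\ (n <= dcard A + dcard B)%N,
    embeds A (amalgam d), embeds B (amalgam d) & embeds (amalgam d) C].
Proof.
move=> fA hB; pose P := (f @: 'I_(dcard A) :|: h @: 'I_(dcard B))%SET.
have fP x : f x \in P by rewrite finset.in_setU imset_f.
have hP y : h y \in P by rewrite finset.in_setU orbC imset_f.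
have [f' f'A ff'] := induced_on_factor fA fP.
have [h' h'B hh'] := induced_on_factor hB hP.
have f'h'_onto z : (exists x, f' x = z) \/ (exists y, h' y = z).
  have /setUP[/imsetP[x _ fx]|/imsetP[y _ hy]] := enum_valP z.
    by left; exists x; apply: enum_val_inj; rewrite -ff'.
  by right; exists y; apply: enum_val_inj; rewrite -hh'.
have E := jointly_onto_amalgam f'A h'B f'h'_onto.
exists #|P|, ([ffun x => f' x], [ffun y => h' y], [ffun j => rel (induced_on P) (s j)]).
rewrite -E; split; [|by exists f' | by exists h' |].
  apply: leq_trans (leq_card_setU _ _) _.
  by apply: leq_add; apply: leq_trans (leq_imset_card _ _) _; rewrite card_ord.
by exists enum_val; apply: induced_on_embedding.
Qed.

End Amalgam.

Section Ideals.
Variables (I : Type) (mu : I -> nat).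
Hypothesis mu_pos : forall i, (0 < mu i)%N.

Definition empty_struct : fstruct mu := @FStruct _ mu 0 (fun=> finset.set0).

Lemma Omega_le_empty (a : Omega mu) : Omega_le (iso_type empty_struct) a.
Proof.
apply/(Omega_leP (iso_type_self _) (rep_in a)).
have f : 'I_0 -> 'I_(dcard (rep a)) by case.
by exists f; split=> [[]|i t] //; case: (tnth t (Ordinal (mu_pos i))).
Qed.

Section AmalgamTypes.
Variables (k : nat) (s : 'I_k -> I).
Hypothesis s_onto : forall i, (2 <= mu i)%N -> exists j, s j = i.

Definition amalgam_types (a b : Omega mu) : set (Omega mu) :=
  [set c | [/\ Omega_le a c, Omega_le b c &
    exists (n : 'I_(dcard (rep a) + dcard (rep b)).+1)
           (d : amalgam_data s (rep a) (rep b) n), c = iso_type (amalgam d)]].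

Lemma finite_amalgam_types a b : finite_set (amalgam_types a b).
Proof.
pose N := (dcard (rep a) + dcard (rep b)).+1.
apply: (@sub_finite_set _ _ (\bigcup_(n in [set: 'I_N])
    range (fun d : amalgam_data s (rep a) (rep b) n => iso_type (amalgam d)))).
  by move=> c [_ _ [n [d ->]]]; exists n => //; exists d.
by apply: bigcup_finite => [|n _]; [|apply: finite_image]; apply: finite_finset.
Qed.

Lemma ideal_meets_amalgam_types (J : set (Omega mu)) a b :
  is_ideal J -> J a -> J b -> exists2 c, amalgam_types a b c & J c.
Proof.
move=> [_ [J_down J_dir]] Ja Jb; have [c Jc [ac bc]] := J_dir a b Ja Jb.
move: ac bc; rewrite !(Omega_leP (rep_in _) (rep_in c)) => -[f fa] [h hb].
have [n [d [n_le ad bd dc]]] := amalgam_between mu_pos s_onto fa hb.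
exists (iso_type (amalgam d)); last first.
  by apply: J_down Jc; apply/(Omega_leP (iso_type_self _) (rep_in c)).
split; [exact/(Omega_leP (rep_in a) (iso_type_self _))
       |exact/(Omega_leP (rep_in b) (iso_type_self _))|].
by exists (Ordinal (n_le : n < _.+1)%N), d.
Qed.

End AmalgamTypes.

Lemma closed_ideals : finite_set [set i | (2 <= mu i)%N] -> closed (@ideals I mu).
Proof.
move=> /finite_set_enum[k [s s_onto]] F /closure_ptwsP F_cl; split; [|split].
- have [g [[a ga] [g_down _]] gF] := F_cl _ (finite_set1 (iso_type empty_struct)).
  exists (iso_type empty_struct); rewrite /= -(gF _ erefl).
  exact: g_down (Omega_le_empty a) ga.
- move=> a b ab Fb; have [g [_ [g_down _]] gF] := F_cl _ (finite_set2 a b).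
  rewrite /= -(gF a (or_introl erefl)); apply: g_down ab _.
  by rewrite /= (gF b (or_intror erefl)).
- move=> a b Fa Fb.
  have K_fin : finite_set ([set a; b] `|` amalgam_types s a b).
    by rewrite finite_setU; split; [apply: finite_set2 | apply: finite_amalgam_types].
  have [g g_ideal gF] := F_cl _ K_fin.
  have ga : g a by rewrite (gF a (or_introl (or_introl erefl))).
  have gb : g b by rewrite (gF b (or_introl (or_intror erefl))).
  have [c cK gc] := ideal_meets_amalgam_types s_onto g_ideal ga gb.
  exists c; first by rewrite /= -(gF c (or_intror cK)).
  by case: cK.
Qed.

Lemma compact_ideals : finite_set [set i | (2 <= mu i)%N] -> compact (@ideals I mu).
Proof.
move=> S_fin.
exact: (subclosed_compact (closed_ideals S_fin) (@compact_ptws_bool (Omega mu))).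
Qed.

End Ideals.

Section Edge.
Variables (I : Type) (mu : I -> nat).

Definition edge (i : I) : fstruct mu := @FStruct _ mu 2 (fun i' =>
  [set t | asbool (i' = i /\ t = pair_tuple _ ord0 ord_max)])%SET.

Lemma edge_not_embeds i i' : i <> i' -> ~ embeds (edge i) (edge i').
Proof.
move=> ii' edge_ii'.
have : rel (edge i) i != finset.set0.
  by apply/finset.set0Pn; exists (pair_tuple _ ord0 ord_max); rewrite inE; apply/asboolP.
by move=> /(embeds_rel_neq0 edge_ii') /finset.set0Pn[t]; rewrite inE => /asboolP[].
Qed.

End Edge.

Section Triangle.
Variables (I : Type) (mu : I -> nat) (i0 i1 j : I).
Hypotheses (mu_i0 : (1 < mu i0)%N) (mu_i1 : (1 < mu i1)%N) (mu_j : (1 < mu j)%N).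

Let v0 : 'I_3 := ord0.
Let v1 : 'I_3 := Ordinal (isT : 1 < 3)%N.
Let v2 : 'I_3 := ord_max.

Definition triangle : fstruct mu := @FStruct _ mu 3 (fun i =>
  [set t | asbool [\/ i = i0 /\ t = pair_tuple _ v0 v1, i = i1 /\ t = pair_tuple _ v0 v2
                    | i = j /\ t = pair_tuple _ v1 v2]])%SET.

Lemma edge_embedding_triangle0 : embedding (edge mu i0) triangle (lift v2).
Proof.
split=> [|i t]; first exact: lift_inj.
rewrite /= !inE.
have [-> ->] : v0 = lift v2 ord0 /\ v1 = lift v2 ord_max by split; apply: val_inj.
apply/asboolP/asboolP => [[ei ->]|[[ei /eqP]|[ei /eqP]|[ei /eqP]]]; subst i.
- by constructor 1; rewrite map_pair_tuple.
- by rewrite map_lift_pair_tuple => /eqP.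
- by rewrite (negbTE (map_lift_neq_pair_tupler _ t _ mu_i1)).
- by rewrite (negbTE (map_lift_neq_pair_tupler _ t _ mu_j)).
Qed.

Lemma edge_embedding_triangle1 : embedding (edge mu i1) triangle (lift v1).
Proof.
split=> [|i t]; first exact: lift_inj.
rewrite /= !inE.
have [-> ->] : v0 = lift v1 ord0 /\ v2 = lift v1 ord_max by split; apply: val_inj.
apply/asboolP/asboolP => [[ei ->]|[[ei /eqP]|[ei /eqP]|[ei /eqP]]]; subst i.
- by constructor 2; rewrite map_pair_tuple.
- by rewrite (negbTE (map_lift_neq_pair_tupler _ t _ mu_i0)).
- by rewrite map_lift_pair_tuple => /eqP.
- by rewrite (negbTE (map_lift_neq_pair_tuplel _ t _ (ltnW mu_j))).
Qed.

Lemma triangle_rel_neq0 i : rel triangle i != finset.set0 -> [\/ i = i0, i = i1 | i = j].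
Proof.
case/finset.set0Pn=> t; rewrite inE => /asboolP[[ei _]|[ei _]|[ei _]].
- exact: Or31.
- exact: Or32.
- exact: Or33.
Qed.

(* Without a j-edge, the image of D misses v1 or v2. *)
Lemma below_triangle D h : embedding D triangle h -> rel D j = finset.set0 ->
  embeds D (edge mu i0) \/ embeds D (edge mu i1).
Proof.
move=> hD Dj.
have factor (v : 'I_3) i :
    embedding (edge mu i) triangle (lift v) -> (forall x, v != h x) -> embeds D (edge mu i).
  move=> vB h_v.
  have [p pD _] : exists2 p, embedding D (edge mu i) p & forall x, h x = lift v (p x).
    apply: embedding_factor hD vB _ => x.
    by have [y hy _] := unlift_some (h_v x); exists y.
  by exists p.
have [[x hx]|no_v1] := pselect (exists x, h x = v1); [left|right].
  apply: factor edge_embedding_triangle0 _ => x'; apply/eqP => hx'.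
  have : pair_tuple (mu j) x x' \in rel D j.
    by rewrite hD.2 map_pair_tuple hx -hx' inE; apply/asboolP; apply: Or33.
  by rewrite Dj finset.in_set0.
apply: factor edge_embedding_triangle1 _ => x'; apply/eqP => hx'.
by apply: no_v1; exists x'.
Qed.

End Triangle.

Section NotCompact.
Variables (I : Type) (mu : I -> nat).

Lemma principal_ideal (c : Omega mu) : @ideals I mu (fun d => `[< Omega_le d c >]).
Proof.
split; [|split].
- by exists c; apply/asboolP; apply: Omega_le_refl.
- by move=> a b ab /asboolP bc; apply/asboolP; apply: Omega_le_trans ab bc.
- move=> a b /asboolP ac /asboolP bc; exists c => //.
  by apply/asboolP; apply: Omega_le_refl.
Qed.

Variables (i0 i1 : I).
Hypotheses (i01 : i0 <> i1) (mu_i0 : (1 < mu i0)%N) (mu_i1 : (1 < mu i1)%N).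

Definition below_edges : {ptws Omega mu -> bool} := fun d =>
  `[< Omega_le d (iso_type (edge mu i0)) \/ Omega_le d (iso_type (edge mu i1)) >].

Lemma below_edges_not_ideal : ~ @ideals I mu below_edges.
Proof.
move=> [_ [_ dir]].
have [c /asboolP c_below [i0c i1c]] := dir _ _
  (asboolT (or_introl (Omega_le_refl (iso_type (edge mu i0)))))
  (asboolT (or_intror (Omega_le_refl (iso_type (edge mu i1))))).
have edge_le i i' : Omega_le (iso_type (edge mu i)) (iso_type (edge mu i')) -> i = i'.
  move=> le_ii'; apply: contrapT => ii'; apply: (edge_not_embeds (mu := mu) ii').
  exact/(Omega_leP (iso_type_self _) (iso_type_self _)).
case: c_below => [ci0|ci1].
  by apply: i01; apply/esym/edge_le; apply: Omega_le_trans i1c ci0.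
by apply: i01; apply: edge_le; apply: Omega_le_trans i0c ci1.
Qed.

Definition other_rels (D : fstruct mu) : set I :=
  [set i | [/\ i <> i0, i <> i1 & rel D i != finset.set0]].

(* A type d below the triangle for j has no j-edge unless j is its only
   relation symbol besides i0 and i1; so the finitely many types of K rule out
   only finitely many j. *)
Lemma below_edges_in_closure :
  infinite_set [set i | (1 < mu i)%N] -> closure (@ideals I mu) below_edges.
Proof.
move=> S_inf; apply/closure_ptwsP => K K_fin.
pose bad := \bigcup_(d in K) [set i | other_rels (rep d) = [set i]].
have bad_fin : finite_set (bad `|` [set i0; i1]).
  rewrite finite_setU; split; last exact: finite_set2.
  by apply: bigcup_finite => // d _; apply: finite_singleton_witnesses.
have [j [mu_j /not_orP[bad_j /not_orP[j0 j1]]]] :=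
  infinite_setN0 (infinite_setD S_inf bad_fin).
exists (fun d => `[< Omega_le d (iso_type (triangle mu i0 i1 j)) >]).
  exact: principal_ideal.
move=> d Kd; apply: asbool_equiv_eq; split; last first.
  case=> /Omega_le_trans; apply; apply/(Omega_leP (iso_type_self _) (iso_type_self _)).
    by eexists; apply: edge_embedding_triangle0.
  by eexists; apply: edge_embedding_triangle1.
rewrite (Omega_leP (rep_in d) (iso_type_self _)) => -[h hd].
have Dj : rel (rep d) j = finset.set0.
  apply/eqP; apply: contra_notT bad_j => Dj; exists d => //.
  apply/seteqP; split=> [i [i0i i1i Di]|_ ->]; last by split.
  by have [] := triangle_rel_neq0 (embeds_rel_neq0 (ex_intro _ h hd) Di).
by case: (below_triangle mu_i0 mu_i1 mu_j hd Dj) => dle; [left|right];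
  apply/(Omega_leP (rep_in d) (iso_type_self _)).
Qed.

End NotCompact.

Lemma not_compact_ideals (I : Type) (mu : I -> nat) :
  infinite_set [set i | (2 <= mu i)%N] -> ~ compact (@ideals I mu).
Proof.
move=> S_inf ideals_compact.
have [i0 [mu_i0 _]] := infinite_setN0 (infinite_setD S_inf (finite_set0 I)).
have [i1 [mu_i1 i1_neq]] := infinite_setN0 (infinite_setD S_inf (finite_set1 i0)).
have i01 : i0 <> i1 by move=> i01; apply: i1_neq.
apply: (below_edges_not_ideal i01).
have ideals_closed := compact_closed (@hausdorff_ptws_bool (Omega mu)) ideals_compact.
exact/ideals_closed/below_edges_in_closure.
Qed.

Unset Implicit Arguments.
Set Strict Implicit.

Theorem lemma7 (I : Type) (mu : I -> nat) (mu_pos : forall i, (0 < mu i)%N) :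
  compact (@ideals I mu) <-> finite_set [set i | (2 <= mu i)%N].
Proof.
split; last exact: compact_ideals.
by move=> ideals_compact; apply: contrapT => /not_compact_ideals.
Qed.
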